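(* For every nonnegative integer $l$ there exists a connected graph $G$ with $p(G)-k(G)+1=l$.
   Context: All graphs are finite and simple. For an acyclic digraph $D$, the competition graph $C(D)$ is the graph on $V(D)$ in which distinct $u,v$ are adjacent iff they have a common out-neighbor in $D$. The competition number $k(G)$ is the smallest $k\ge 0$ such that $G$ together with $k$ new isolated vertices is the competition graph of some acyclic digraph. The phylogeny graph $P(D)$ of an acyclic digraph $D$ is the graph on $V(D)$ in which distinct vertices $u,v$ are adjacent iff $(u,v)\in A(D)$, or $(v,u)\in A(D)$, or they have a common out-neighbor in $D$. A phylogeny digraph for a graph $G$ is an acyclic digraph $D$ such that $G$ is an induced subgraph of $P(D)$ and $D$ has no arc from a vertex of $V(D)\setminus V(G)$ to a vertex of $V(G)$. The phylogeny number $p(G)$ is the minimum of $|V(D)\setminus V(G)|$ over all phylogeny digraphs $D$ for $G$. *)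

From mathcomp Require Import all_boot.
Set Implicit Arguments. Unset Strict Implicit. Unset Printing Implicit Defensive.

Definition simple_graph (T : finType) (e : rel T) : Prop :=
  symmetric e /\ irreflexive e.

Definition connected_graph (T : finType) (e : rel T) : Prop :=
  (exists x : T, True) /\ forall x y : T, connect e x y.

(* A digraph on a finite type V is given by its arc relation a.
   It is acyclic iff it has no directed cycle (loops included):
   no arc (x,y) with y reaching x. *)
Definition acyclic (V : finType) (a : rel V) : Prop :=
  forall x y : V, a x y -> ~~ connect a y x.

Definition common_out (V : finType) (a : rel V) (u v : V) : bool :=
  [exists w, a u w && a v w].

Definition add_isolated (T : finType) (e : rel T) (k : nat) : rel (T + 'I_k) :=
  fun u v => match u, v with inl x, inl y => e x y | _, _ => false end.

(* G ∪ I_k is the competition graph of the acyclic digraph a. *)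
Definition competition_realizes (T : finType) (e : rel T) (k : nat)
  (a : rel (T + 'I_k)) : Prop :=
  acyclic a /\
  forall u v : T + 'I_k, u != v -> add_isolated e u v = common_out a u v.

Definition competition_ok (T : finType) (e : rel T) (k : nat) : Prop :=
  exists a : rel (T + 'I_k), competition_realizes e a.

Definition is_competition_number (T : finType) (e : rel T) (k : nat) : Prop :=
  competition_ok e k /\ forall k', competition_ok e k' -> k <= k'.

(* A phylogeny digraph for G with m extra vertices: acyclic digraph on
   T + 'I_m, G is the induced subgraph of P(D) on T, and there is no arc
   from an extra vertex to a vertex of G. *)
Definition phylogeny_digraph (T : finType) (e : rel T) (m : nat)
  (a : rel (T + 'I_m)) : Prop :=
  [/\ acyclic a,
      (forall x y : T, x != y ->
         e x y = [|| a (inl x) (inl y), a (inl y) (inl x)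
                   | common_out a (inl x) (inl y)]) &
      (forall (i : 'I_m) (x : T), ~~ a (inr i) (inl x))].

Definition phylogeny_ok (T : finType) (e : rel T) (m : nat) : Prop :=
  exists a : rel (T + 'I_m), phylogeny_digraph e a.

Definition is_phylogeny_number (T : finType) (e : rel T) (p : nat) : Prop :=
  phylogeny_ok e p /\ forall p', phylogeny_ok e p' -> p <= p'.

(* With n = l + 1, take K_(n,2) on z_0..z_(n-1) and x_false, x_true, and add a
   clique of 2n vertices w_(i,b), all adjacent to x_true.  In a competition
   digraph the w_(i,b) are common prey of z_i and x_b and one extra vertex is
   prey of the clique, so k = 1 (no vertex is isolated, so k >= 1).  In a
   phylogeny digraph every edge z_i x_b is explained by an arc or a common
   out-neighbour; as the z's and x's have no common neighbours and each side is
   independent, distinct edges get distinct explanations, none of which is a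
   source of the digraph restricted to the z's and x's.  Counting gives
   2n <= (n + 2 - 1) + p, i.e. p >= l, and an explicit digraph attains l. *)

From mathcomp Require Import all_boot zify.
Set Implicit Arguments. Unset Strict Implicit. Unset Printing Implicit Defensive.

Section Acyclic.
Variable V : finType.
Implicit Type a : rel V.

Lemma ranked_acyclic a (r : V -> nat) :
  (forall x y, a x y -> r x < r y) -> acyclic a.
Proof.
move=> a_r x y axy; apply/negP => /connectP [p pth xE].
have: r y <= r (last y p).
  elim: p y pth {axy xE} => [|z q IH] u //= /andP [auz qz].
  exact: leq_trans (ltnW (a_r _ _ auz)) (IH _ qz).
by rewrite -xE leqNgt a_r.
Qed.

Lemma acyclic_irrefl a : acyclic a -> irreflexive a.
Proof.
by move=> acy x; apply/negbTE/negP => axx; move: (acy _ _ axx); rewrite connect0.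
Qed.

Lemma acyclic_rev a : acyclic a -> acyclic [rel x y | a y x].
Proof. by move=> acy x y /= ayx; rewrite connect_rev; apply: acy. Qed.

Lemma acyclic_sink a (x0 : V) : acyclic a -> exists x, forall y, ~~ a x y.
Proof.
move=> acy; pose reach x := #|[set y | connect a x y]|.
have [x _ min_x] := @arg_minnP V x0 predT reach isT.
exists x => y; apply/negP => axy.
have := min_x y isT; rewrite leqNgt => /negP; apply; apply: proper_card.
rewrite properE; apply/andP; split.
  by apply/subsetP => z; rewrite !inE; apply/connect_trans/connect1.
by apply/subsetPn; exists x; rewrite !inE ?connect0 ?acy.
Qed.

Lemma acyclic_source a (x0 : V) : acyclic a -> exists x, forall y, ~~ a y x.
Proof. by move=> /acyclic_rev/(acyclic_sink x0) [x sink]; exists x. Qed.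

End Acyclic.

Lemma acyclic_relpre (U V : finType) (f : U -> V) (a : rel V) :
  acyclic a -> acyclic (relpre f a).
Proof.
move=> acy x y /= afxy; apply/negP => /connectP [p pth xE].
have/negP := acy _ _ afxy; apply; apply/connectP.
by exists (map f p); rewrite ?path_map // last_map -xE.
Qed.

Lemma competition_ok_gt0 (T : finType) (e : rel T) (k : nat) (x0 : T) :
  irreflexive e -> (forall x, exists y, e x y) -> competition_ok e k -> 0 < k.
Proof.
move=> e_irr nbr; case: k => // -[a [acy comp]].
have [[t|[]//] sink_t] := acyclic_sink (inl x0) acy.
have [t' ett'] := nbr t.
have tt' : inl t != inl t' :> T + 'I_0.
  by apply: contraTneq ett' => -[<-]; rewrite e_irr.
have /existsP [w /andP [atw _]] : common_out a (inl t) (inl t').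
  by rewrite -comp.
by move: (sink_t w); rewrite atw.
Qed.

Section PhylogenyLowerBound.
Variables (T Z X : finType) (e : rel T) (zv : Z -> T) (xv : X -> T).
Hypotheses (e_irr : irreflexive e) (zv_inj : injective zv) (xv_inj : injective xv).
Hypothesis zx_adj : forall i b, e (zv i) (xv b).
Hypothesis Z_indep : forall i j, ~~ e (zv i) (zv j).
Hypothesis X_indep : forall b c, ~~ e (xv b) (xv c).
Hypothesis zx_no_common_nbr : forall i b y, e (zv i) y -> e (xv b) y -> False.
Variable z0 : Z.

Section Witness.
Variables (m : nat) (a : rel (T + 'I_m)).
Hypothesis acy : acyclic a.
Hypothesis a_induces : forall x y : T, x != y ->
  e x y = [|| a (inl x) (inl y), a (inl y) (inl x) | common_out a (inl x) (inl y)].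

Lemma arc_adj x y : a (inl x) (inl y) -> e x y.
Proof.
move=> axy; have xy : x != y by apply: contraTneq axy => ->; rewrite acyclic_irrefl.
by rewrite a_induces // axy.
Qed.

Lemma common_out_nonadj x y w : ~~ e x y -> a (inl x) w -> a (inl y) w -> x = y.
Proof.
move=> nexy axw ayw; apply/eqP; apply: contraNT nexy => xy.
by rewrite a_induces //; apply/or3P/Or33/existsP; exists w; rewrite axw.
Qed.

Lemma zv_neq_xv i b : zv i != xv b.
Proof. by apply: contraTneq (zx_adj i b) => ->; rewrite e_irr. Qed.

(* The edge z_i x_b is explained in P(D) by an arc or by a common
   out-neighbour; record its head or that neighbour.  The last branch is
   unreachable by [witnessP]. *)
Definition witness (p : Z * X) : (Z + X) + 'I_m :=
  let: (i, b) := p in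
  if a (inl (zv i)) (inl (xv b)) then inl (inr b)
  else if a (inl (xv b)) (inl (zv i)) then inl (inl i)
  else if [pick j | a (inl (zv i)) (inr j) && a (inl (xv b)) (inr j)] is Some j
       then inr j
  else inl (inl i).

Lemma witnessP i b :
  [\/ a (inl (zv i)) (inl (xv b)) /\ witness (i, b) = inl (inr b),
      a (inl (xv b)) (inl (zv i)) /\ witness (i, b) = inl (inl i) |
      exists j, [/\ a (inl (zv i)) (inr j), a (inl (xv b)) (inr j) &
                    witness (i, b) = inr j]].
Proof.
rewrite /witness; case ab: (a _ _); first by apply: Or31.
case ba: (a _ _); first by apply: Or32.
case: pickP => [j /andP [azj axj] | no_extra]; first by apply: Or33; exists j.
have /existsP [[y|j] /andP [azy axy]] : common_out a (inl (zv i)) (inl (xv b)).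
  by move: (zx_adj i b); rewrite a_induces ?zv_neq_xv // ab ba.
- by case: (zx_no_common_nbr (arc_adj azy) (arc_adj axy)).
- by move: (no_extra j); rewrite azy axy.
Qed.

Lemma witness_inj : injective witness.
Proof.
move=> [i1 b1] [i2 b2].
case: (witnessP i1 b1) => [[h1 ->]|[h1 ->]|[j1 [h1 h1' ->]]];
case: (witnessP i2 b2) => [[h2 ->]|[h2 ->]|[j2 [h2 h2' ->]]] // [E]; subst.
- by rewrite (zv_inj (common_out_nonadj (Z_indep _ _) h1 h2)).
- by rewrite (xv_inj (common_out_nonadj (X_indep _ _) h1 h2)).
- by rewrite (zv_inj (common_out_nonadj (Z_indep _ _) h1 h2))
             (xv_inj (common_out_nonadj (X_indep _ _) h1' h2')).
Qed.

(* A source of D restricted to the z's and x's is the head of no witnessing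
   arc, so the injective witness map misses a point. *)
Lemma phylogeny_digraph_card : #|Z| * #|X| < #|Z| + #|X| + m.
Proof.
pose hv (s : Z + X) : T := match s with inl i => zv i | inr b => xv b end.
have [s0 src] :=
  acyclic_source (inl z0) (acyclic_relpre (f := fun s => inl (hv s)) acy).
have witness_neq_src p : witness p != inl s0.
  case: p => i b; case: (witnessP i b) => [[h ->]|[h ->]|[j [_ _ ->]]] //.
  - by apply: contraNneq (src (inl i)) => -[<-].
  - by apply: contraNneq (src (inr b)) => -[<-].
have : witness @: setT \proper [set: (Z + X) + 'I_m].
  rewrite properT; apply/eqP => /setP /(_ (inl s0)).
  rewrite in_setT => /imsetP [p _ s0E].
  by move: (witness_neq_src p); rewrite -s0E eqxx.
by move/proper_card;
  rewrite (card_imset _ witness_inj) !cardsT !card_sum card_prod card_ord.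
Qed.

End Witness.

Lemma phylogeny_ok_card m : phylogeny_ok e m -> #|Z| * #|X| < #|Z| + #|X| + m.
Proof. by case=> a [acy a_induces _]; exact: phylogeny_digraph_card acy a_induces. Qed.

End PhylogenyLowerBound.

Section Construction.
Variable l : nat.
Local Notation n := l.+1.

(* [inl (inl i)] is z_i, [inl (inr (i, b))] is w_(i,b) and [inr b] is x_b. *)
Definition gvert : finType := (('I_n + ('I_n * bool)) + bool)%type.

Definition gadj (u v : gvert) : bool :=
  match u, v with
  | inl (inl _), inr _ | inr _, inl (inl _) => true
  | inl (inr p), inl (inr q) => p != q
  | inl (inr _), inr b | inr b, inl (inr _) => b
  | _, _ => false
  end.

Lemma gadj_sym : symmetric gadj.
Proof. by move=> [[i|p]|b] [[j|q]|c] //=; rewrite eq_sym. Qed.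

Lemma gadj_irr : irreflexive gadj.
Proof. by move=> [[i|p]|b] //=; rewrite eqxx. Qed.

Lemma gadj_has_nbr u : exists v, gadj u v.
Proof.
by case: u => [[i|p]|b]; [exists (inr true) | exists (inr true) | exists (inl (inl ord0))].
Qed.

Lemma gadj_connected : connected_graph gadj.
Proof.
split; first by exists (inr true).
have to_xtrue u : connect gadj u (inr true).
  case: u => [[i|p]|[]]; rewrite ?connect0 //; try exact: connect1.
  by apply: (connect_trans (y := inl (inl ord0) : gvert)); apply: connect1.
move=> u v; apply: connect_trans (to_xtrue u) _.
by rewrite (sym_connect_sym gadj_sym).
Qed.

(* z_i -> w_(i,b) <- x_b; all the w's and x_true share one extra vertex. *)
Definition competition_arcs (u v : gvert + 'I_1) : bool :=
  match u, v with
  | inl (inl (inl i)), inl (inl (inr (j, _))) => i == j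
  | inl (inr b), inl (inl (inr (_, c))) => b == c
  | inl (inr true), inr _ | inl (inl (inr _)), inr _ => true
  | _, _ => false
  end.

Lemma competition_realizes_arcs : competition_realizes gadj competition_arcs.
Proof.
split.
  apply: (@ranked_acyclic _ _ (fun u => match u with
    | inl (inl (inr _)) => 1 | inr _ => 2 | _ => 0 end)).
  by move=> [[[i|[j b]]|[]]|?] [[[i'|[j' b']]|[]]|?].
move=> [[[i|[i b]]|[]]|o] [[[j|[j c]]|[]]|o'] //= neq_uv.
all: try (apply/esym/existsP => -[[[[k|[k d]]|[]]|o''] /andP [h1 h2]] //=).
- by move: h1 h2 neq_uv => /= /eqP -> /eqP ->; rewrite eqxx.
- by apply/esym/existsP; exists (inl (inl (inr (i, true)))); rewrite /= eqxx.
- by apply/esym/existsP; exists (inl (inl (inr (i, false)))); rewrite /= eqxx.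
- have -> : (i, b) != (j, c) by apply: contraNneq neq_uv => ->.
  by apply/esym/existsP; exists (inr ord0).
- by apply/esym/existsP; exists (inr ord0).
- by apply/esym/existsP; exists (inl (inl (inr (j, true)))); rewrite /= eqxx.
- by apply/esym/existsP; exists (inr ord0).
- by move: h1 h2 => /=; case: d.
- by apply/esym/existsP; exists (inl (inl (inr (j, false)))); rewrite /= eqxx.
- by move: h1 h2 => /=; case: d.
Qed.

Lemma competition_number_gadj : is_competition_number gadj 1.
Proof.
split; first by exists competition_arcs; exact: competition_realizes_arcs.
by move=> k; apply: (competition_ok_gt0 (inr true) gadj_irr gadj_has_nbr).
Qed.

(* x_true dominates the z's and w's, z_0 -> x_false, x_false and z_(j+1)
   share the extra vertex j, and the w's form a transitive tournament. *)
Definition phylogeny_arcs (u v : gvert + 'I_l) : bool :=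
  match u, v with
  | inl (inr true), inl (inl (inl _)) | inl (inr true), inl (inl (inr _)) => true
  | inl (inl (inl i)), inl (inr false) => val i == 0
  | inl (inr false), inr _ => true
  | inl (inl (inl i)), inr j => val i == (val j).+1
  | inl (inl (inr p)), inl (inl (inr q)) => enum_rank p < enum_rank q
  | _, _ => false
  end.

Lemma phylogeny_digraph_arcs : phylogeny_digraph gadj phylogeny_arcs.
Proof.
split => //.
  apply: (@ranked_acyclic _ _ (fun u => match u with
    | inl (inr true) => 0 | inl (inl (inl _)) => 1 | inl (inr false) => 2
    | inr _ => 3 | inl (inl (inr p)) => 4 + enum_rank p end)).
  by move=> [[[i|p]|[]]|?] [[[i'|p']|[]]|?].
move=> [[i|[i b]]|[]] [[j|[j c]]|[]] //= neq_uv.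
all: try (apply/esym/existsP => -[[[[k|[k d]]|[]]|o''] /andP [h1 h2]] //=).
- move: h1 h2 => /= /eqP h1 /eqP h2.
  by move: neq_uv; rewrite (_ : i = j) ?eqxx //; apply: val_inj; rewrite /= h1 h2.
- move: h1 h2 => /= /eqP h1 /eqP h2.
  by move: neq_uv; rewrite (_ : i = j) ?eqxx //; apply: val_inj; rewrite /= h1 h2.
- case: eqP => [//|/eqP i0].
  have hi : (nat_of_ord i).-1 < l by case: i i0 => -[|k] Hk.
  move: i0; rewrite -lt0n => i0.
  by apply/esym/existsP; exists (inr (Ordinal hi)); rewrite /= (prednK i0) eqxx.
- have -> : (i, b) != (j, c) by apply: contraNneq neq_uv => ->.
  have : enum_rank (i, b) != enum_rank (j, c).
    by rewrite (inj_eq enum_rank_inj); apply: contraNneq neq_uv => ->.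
  by rewrite neq_ltn => /orP [->|->]; rewrite ?orbT.
- case: eqP => [//|/eqP i0].
  have hi : (nat_of_ord j).-1 < l by case: j i0 => -[|k] Hk.
  move: i0; rewrite -lt0n => i0.
  by apply/esym/existsP; exists (inr (Ordinal hi)); rewrite /= (prednK i0) eqxx.
Qed.

Lemma phylogeny_number_gadj : is_phylogeny_number gadj l.
Proof.
split; first by exists phylogeny_arcs; exact: phylogeny_digraph_arcs.
move=> m ok_m.
have zv_inj : injective (fun i => inl (inl i) : gvert) by move=> ? ? [].
have xv_inj : injective (inr : bool -> gvert) by move=> ? ? [].
have no_common_nbr i b (y : gvert) :
  gadj (inl (inl i)) y -> gadj (inr b) y -> False by case: y => [[]|].
have := phylogeny_ok_card gadj_irr zv_inj xv_inj (fun _ _ => erefl)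
  (fun _ _ => erefl) (fun _ _ => erefl) no_common_nbr ord0 ok_m.
by rewrite card_ord card_bool; lia.
Qed.

End Construction.

Theorem mainTheorem11 :
  forall l : nat,
  exists (T : finType) (e : rel T),
    [/\ simple_graph e, connected_graph e &
        exists p k : nat,
          [/\ is_phylogeny_number e p, is_competition_number e k &
              p + 1 = k + l]].
Proof.
move=> l; exists (gvert l), (@gadj l); split.
- by split; [exact: gadj_sym | exact: gadj_irr].
- exact: gadj_connected.
exists l, 1; split.
- exact: phylogeny_number_gadj.
- exact: competition_number_gadj.
- by rewrite addnC.
Qed.
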